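(* Let $K$ be a commutative ring with unit and let $\mathfrak X$ be a class of representations in $Rep\text{-}K$ of the form $\mathfrak X=T^*=\{(V,G)\mid \text{every formula of } T \text{ holds in } (V,G)\}$, where $T$ is a set of action-type formulas. Then $\mathfrak X$ is saturated, right-hereditary and right-local.
   Context: $Rep\text{-}K$ is the variety of two-sorted algebras (representations) $(V,G)$, where $V$ is a $K$-module, $G$ a group, and $\circ: V\times G\to V$ an action such that $a\mapsto a\circ g$ is $K$-linear, $(a\circ g_1)\circ g_2=a\circ g_1g_2$, and $a\circ 1=a$. Morphisms are pairs $(\alpha,\beta)$ with $\alpha$ a $K$-module homomorphism, $\beta$ a group homomorphism, and $(a\circ g)^\alpha=a^\alpha\circ g^\beta$. For countable sets $X,Y$, let $F=F(Y)$ be the free group on $Y$, $KF$ its group algebra, and $W=W(X,Y)=(XKF,F)$ the free representation, where $XKF$ is the free right $KF$-module on $X$ with action $w\circ f=wf$. Every pair of maps $X\to V$, $Y\to G$ extends uniquely to a homomorphism $\mu=(\alpha,\beta):W\to(V,G)$. Action-type formulas are built from atomic formulas $w\equiv 0$ ($w\in XKF$) using $\vee,\wedge,\neg$ and quantifiers $\exists x$ ($x\in X$) only (no group equalities $f\equiv1$, no quantifiers over $Y$). The value $Val_{(V,G)}(u)\subseteq Hom(W,(V,G))$ is defined by: $\mu=(\alpha,\beta)\in Val(w\equiv0)$ iff $w^\alpha=0$ in $V$ (here $w^\alpha=\sum x_i^\alpha\circ u_i^\beta$ for $w=\sum x_iu_i$); $\vee,\wedge,\neg$ act as union, intersection, complement;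 $\mu=(\alpha,\beta)\in Val(\exists x\,u)$ iff there is $\nu=(\alpha',\beta)\in Val(u)$ with $\alpha'(x')=\alpha(x')$ for all $x'\in X$, $x'\neq x$. A formula $u$ holds in $(V,G)$ if $Val_{(V,G)}(u)=Hom(W,(V,G))$. For a representation $(V,G)$, the corresponding faithful representation is $(V,\overline G)$ with $\overline G=G/N$, $N$ the kernel of the action of $G$ on $V$. A class $\mathfrak X$ is saturated if $(V,G)\in\mathfrak X \iff (V,\overline G)\in\mathfrak X$; right-hereditary if $(V,G)\in\mathfrak X$ implies $(V,H)\in\mathfrak X$ for every subgroup $H\le G$; right-local if $(V,G)\in\mathfrak X$ whenever $(V,H)\in\mathfrak X$ for all finitely generated subgroups $H\le G$. *)

From HB Require Import structures.
From mathcomp Require Import all_boot all_algebra.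
From Stdlib Require Import ClassicalEpsilon FunctionalExtensionality
  PropExtensionality ProofIrrelevance.
Set Implicit Arguments. Unset Strict Implicit. Unset Printing Implicit Defensive.
Import GRing.Theory.
Local Open Scope ring_scope.

Record grp := Grp {
  gcar :> Type;
  gmul : gcar -> gcar -> gcar;
  ginv : gcar -> gcar;
  gone : gcar;
  gmulA : forall x y z, gmul x (gmul y z) = gmul (gmul x y) z;
  gmul1 : forall x, gmul gone x = x;
  gmulV : forall x, gmul (ginv x) x = gone }.

Arguments gone {g}.

Lemma gmulVr (G : grp) (x : G) : gmul x (ginv x) = gone.
Proof.
have H := gmulV (ginv x).
rewrite -[gmul x (ginv x)]gmul1 -{1}H -gmulA (gmulA (ginv x) x) gmulV gmul1.
exact: H.
Qed.

Lemma sig_eqP (A : Type) (P : A -> Prop) (x y : sig P) :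
  proj1_sig x = proj1_sig y -> x = y.
Proof.
case: x y => [x px] [y py] /= exy; subst y; f_equal; apply: proof_irrelevance.
Qed.

Record rep (K : pzRingType) := Rep {
  rV : lmodType K;
  rG : grp;
  ract : rV -> rG -> rV;
  ract_lin : forall (g : rG) (k : K) (u v : rV),
      ract (k *: u + v) g = k *: ract u g + ract v g;
  ract_mul : forall (u : rV) (g1 g2 : rG),
      ract (ract u g1) g2 = ract u (gmul g1 g2);
  ract_one : forall u : rV, ract u gone = u }.

Section Constructions.
Variable K : pzRingType.

Record subgroup (G : grp) := Subgroup {
  sgpred :> G -> Prop;
  sg1 : sgpred gone;
  sgM : forall x y, sgpred x -> sgpred y -> sgpred (gmul x y);
  sgV : forall x, sgpred x -> sgpred (ginv x) }.

Definition sub_grp (G : grp) (S : subgroup G) : grp.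
Proof.
refine (@Grp {g : G | S g}
  (fun x y => exist _ (gmul (proj1_sig x) (proj1_sig y))
                (sgM (proj2_sig x) (proj2_sig y)))
  (fun x => exist _ (ginv (proj1_sig x)) (sgV (proj2_sig x)))
  (exist _ gone (sg1 S)) _ _ _).
- by move=> x y z; apply: sig_eqP; rewrite /= gmulA.
- by move=> x; apply: sig_eqP; rewrite /= gmul1.
- by move=> x; apply: sig_eqP; rewrite /= gmulV.
Defined.

Definition restrict (R : rep K) (S : subgroup (rG R)) : rep K.
Proof.
refine (@Rep K (rV R) (sub_grp S) (fun u h => ract u (proj1_sig h)) _ _ _).
- by move=> g k u v; rewrite ract_lin.
- by move=> u g1 g2; rewrite ract_mul.
- by move=> u; rewrite /= ract_one.
Defined.

Inductive gen (G : grp) (s : seq G) : G -> Prop :=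
  | gen_in x : List.In x s -> gen s x
  | gen_one : gen s gone
  | gen_mul x y : gen s x -> gen s y -> gen s (gmul x y)
  | gen_inv x : gen s x -> gen s (ginv x).

Definition fin_gen (G : grp) (S : subgroup G) : Prop :=
  exists s : seq G, forall g, S g <-> gen s g.

Definition kerN (R : rep K) (g : rG R) : Prop := forall u : rV R, ract u g = u.

Definition coset (R : rep K) (g : rG R) : rG R -> Prop :=
  fun h => kerN (gmul (ginv g) h).

Definition qcar (R : rep K) := {P : rG R -> Prop | exists g, P = coset g}.

Definition qrep (R : rep K) (P : qcar R) : rG R :=
  proj1_sig (constructive_indefinite_description _ (proj2_sig P)).

Lemma qrepP (R : rep K) (P : qcar R) : proj1_sig P = coset (qrep P).
Proof. exact: (proj2_sig (constructive_indefinite_description _ (proj2_sig P))). Qed.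

Definition qmk (R : rep K) (g : rG R) : qcar R :=
  exist _ (coset g) (ex_intro _ g erefl).

Lemma cosetP (R : rep K) (g h : rG R) :
  coset g h <-> forall u, ract u h = ract u g.
Proof.
split=> H u.
- by rewrite -{1}(gmul1 h) -(gmulVr g) -gmulA -ract_mul H.
- by rewrite -ract_mul H ract_mul gmulV ract_one.
Qed.

Lemma qmk_eq (R : rep K) (g h : rG R) :
  (forall u, ract u g = ract u h) -> qmk g = qmk h.
Proof.
move=> E; apply: sig_eqP => /=; apply: functional_extensionality => x.
apply: propositional_extensionality; rewrite !cosetP; split=> H u.
- by rewrite H E.
- by rewrite H E.
Qed.

Lemma qrep_act (R : rep K) (g : rG R) u : ract u (qrep (qmk g)) = ract u g.
Proof.
have: coset (qrep (qmk g)) g by rewrite -qrepP /= /coset /kerN => v;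
  rewrite gmulV ract_one.
by move/cosetP=> ->.
Qed.

Lemma qmk_rep (R : rep K) (P : qcar R) : P = qmk (qrep P).
Proof. by apply: sig_eqP; rewrite qrepP. Qed.

Definition quot_grp (R : rep K) : grp.
Proof.
refine (@Grp (qcar R)
  (fun P Q => qmk (gmul (qrep P) (qrep Q)))
  (fun P => qmk (ginv (qrep P)))
  (qmk gone) _ _ _).
- move=> P Q S; apply: qmk_eq => u.
  by rewrite -!ract_mul !qrep_act !ract_mul gmulA.
- move=> P; rewrite [in RHS](qmk_rep P); apply: qmk_eq => u.
  by rewrite -ract_mul qrep_act ract_one.
- move=> P; apply: qmk_eq => u.
  by rewrite -ract_mul qrep_act ract_mul gmulV.
Defined.

Definition faithful_rep (R : rep K) : rep K.
Proof.
refine (@Rep K (rV R) (quot_grp R) (fun u P => ract u (qrep P)) _ _ _).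
- by move=> g k u v; rewrite ract_lin.
- by move=> u P Q /=; rewrite qrep_act ract_mul.
- by move=> u /=; rewrite qrep_act ract_one.
Defined.

Definition saturated (X : rep K -> Prop) : Prop :=
  forall R : rep K, X R <-> X (faithful_rep R).

Definition right_hereditary (X : rep K -> Prop) : Prop :=
  forall R : rep K, X R -> forall S : subgroup (rG R), X (restrict S).

Definition right_local (X : rep K -> Prop) : Prop :=
  forall R : rep K,
    (forall S : subgroup (rG R), fin_gen S -> X (restrict S)) -> X R.

(* Free representation W(X,Y), X = Y = nat.                            *)
(* An element of F(Y) is presented by a word [(y1,e1);...;(yn,en)]      *)
(* meaning y1^(+-1) ... yn^(+-1) (e = true means inverse); an element   *)
(* of XKF is presented by a finite formal sum [(k1,x1,f1);...]          *)
(* meaning sum_i x_i (k_i f_i).                                          *)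
Definition fword := seq (nat * bool).
Definition xkf := seq (K * nat * fword).

Fixpoint weval (G : grp) (b : nat -> G) (w : fword) : G :=
  match w with
  | [::] => gone
  | (y, e) :: w' => gmul (if e then ginv (b y) else b y) (weval b w')
  end.

(* w^alpha for the homomorphism mu = (alpha,beta) determined by a : X -> V, b : Y -> G *)
Fixpoint xeval (R : rep K) (a : nat -> rV R) (b : nat -> rG R) (w : xkf) : rV R :=
  match w with
  | [::] => 0
  | (k, x, f) :: w' => k *: ract (a x) (weval b f) + xeval a b w'
  end.

Inductive formula :=
  | FZero of xkf
  | FOr of formula & formula
  | FAnd of formula & formula
  | FNot of formula
  | FEx of nat & formula.

Fixpoint sat (R : rep K) (a : nat -> rV R) (b : nat -> rG R) (u : formula) : Prop :=
  match u with
  | FZero w => xeval a b w = 0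
  | FOr u1 u2 => sat a b u1 \/ sat a b u2
  | FAnd u1 u2 => sat a b u1 /\ sat a b u2
  | FNot u1 => ~ sat a b u1
  | FEx x u1 => exists v : rV R, sat (fun x' => if x' == x then v else a x') b u1
  end.

Definition holds (R : rep K) (u : formula) : Prop :=
  forall (a : nat -> rV R) (b : nat -> rG R), sat a b u.

Definition models (T : formula -> Prop) : rep K -> Prop :=
  fun R => forall u, T u -> holds R u.

End Constructions.

(* The value of an action-type formula at mu = (alpha, beta) depends on beta
   only through the operators by which the finitely many words occurring in
   the formula act on V.  Every assignment into G/N lifts to G, and passing
   from (V, G) to (V, G/N) or to (V, H) does not change these operators.
   Moreover the words only involve finitely many group variables, so the
   formula cannot distinguish G from the subgroup generated by their images. *)
From mathcomp Require Import all_boot all_algebra.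
Set Implicit Arguments. Unset Strict Implicit. Unset Printing Implicit Defensive.
Local Open Scope ring_scope.

Section WordEvaluation.
Variable G : grp.

Definition letters (w : fword) : seq nat := map fst w.

Lemma weval_eq_on (b1 b2 : nat -> G) (w : fword) :
  {in letters w, b1 =1 b2} -> weval b1 w = weval b2 w.
Proof.
elim: w => [|[y e] w IH] //= eq_b.
by rewrite eq_b ?mem_head // IH // => z z_w; apply: eq_b; rewrite inE z_w orbT.
Qed.

Lemma weval_morph (H : grp) (phi : G -> H) (b : nat -> G) (w : fword) :
  phi gone = gone -> {morph phi : x y / gmul x y} -> {morph phi : x / ginv x} ->
  phi (weval b w) = weval (phi \o b) w.
Proof.
move=> phi1 phiM phiV; elim: w => [|[y e] w IH] //=.
by rewrite phiM IH; case: e => //; rewrite phiV.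
Qed.

End WordEvaluation.

Section ModuleWithWordActions.
Variables (K : pzRingType) (V : lmodType K).
Implicit Types (a : nat -> V) (act : fword -> V -> V).

(* [sat] with the group forgotten: the word [f] acts on [V] through [act f]. *)
Fixpoint xeval_act a act (w : xkf K) : V :=
  match w with
  | [::] => 0
  | (k, x, f) :: w' => k *: act f (a x) + xeval_act a act w'
  end.

Fixpoint sat_act a act (u : formula K) : Prop :=
  match u with
  | FZero w => xeval_act a act w = 0
  | FOr u1 u2 => sat_act a act u1 \/ sat_act a act u2
  | FAnd u1 u2 => sat_act a act u1 /\ sat_act a act u2
  | FNot u1 => ~ sat_act a act u1
  | FEx x u1 => exists v, sat_act (fun x' => if x' == x then v else a x') act u1
  end.

Definition xwords (w : xkf K) : seq fword := map (fun t => t.2) w.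

Fixpoint fwords (u : formula K) : seq fword :=
  match u with
  | FZero w => xwords w
  | FOr u1 u2 | FAnd u1 u2 => fwords u1 ++ fwords u2
  | FNot u1 | FEx _ u1 => fwords u1
  end.

Lemma xeval_act_ext a act1 act2 (w : xkf K) :
  {in xwords w, forall f, act1 f =1 act2 f} -> xeval_act a act1 w = xeval_act a act2 w.
Proof.
elim: w => [|[[k x] f] w IH] //= eq_act.
by rewrite eq_act ?mem_head // IH // => g g_w; apply: eq_act; rewrite inE g_w orbT.
Qed.

Lemma sat_act_ext act1 act2 (u : formula K) :
  {in fwords u, forall f, act1 f =1 act2 f} ->
  forall a, sat_act a act1 u <-> sat_act a act2 u.
Proof.
elim: u => [w|u1 IH1 u2 IH2|u1 IH1 u2 IH2|u1 IH1|x u1 IH1] /= eq_act a.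
- by rewrite (xeval_act_ext _ eq_act).
- by rewrite IH1 ?IH2 // => f f_u; apply: eq_act; rewrite mem_cat f_u ?orbT.
- by rewrite IH1 ?IH2 // => f f_u; apply: eq_act; rewrite mem_cat f_u ?orbT.
- by rewrite IH1.
- by split=> -[v sat_v]; exists v; move: sat_v; rewrite IH1.
Qed.

End ModuleWithWordActions.

Section Transfer.
Variable K : pzRingType.

Definition word_action (R : rep K) (b : nat -> rG R) (w : fword) (u : rV R) : rV R :=
  ract u (weval b w).

Lemma satE (R : rep K) a (b : nat -> rG R) (u : formula K) :
  sat a b u <-> sat_act a (word_action b) u.
Proof.
have xevalE a' w : xeval a' b w = xeval_act a' (word_action b) w.
  by elim: w => [|[[k x] f] w IH] //=; rewrite IH.
elim: u a => [w|u1 IH1 u2 IH2|u1 IH1 u2 IH2|u1 IH1|x u1 IH1] a /=.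
- by rewrite xevalE.
- by rewrite IH1 IH2.
- by rewrite IH1 IH2.
- by rewrite IH1.
- by split=> -[v sat_v]; exists v; move: sat_v; rewrite IH1.
Qed.

Definition fletters (u : formula K) : seq nat := flatten (map letters (fwords u)).

Lemma sat_eq_on (R : rep K) a (b1 b2 : nat -> rG R) (u : formula K) :
  {in fletters u, b1 =1 b2} -> sat a b1 u <-> sat a b2 u.
Proof.
move=> eq_b; rewrite !satE; apply: sat_act_ext => w w_u v.
rewrite /word_action (weval_eq_on (b2 := b2)) // => y y_w; apply: eq_b.
by apply/flattenP; exists (letters w); rewrite ?map_f.
Qed.

Lemma sat_restrict (R : rep K) (S : subgroup (rG R)) a
    (b : nat -> rG (restrict S)) (u : formula K) :
  sat a b u <-> sat (R := R) a (fun y => proj1_sig (b y)) u.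
Proof.
rewrite !satE; apply: sat_act_ext => w _ v.
by rewrite /word_action /= (@weval_morph (sub_grp S) _ (fun g => proj1_sig g)).
Qed.

Lemma ract_ginv_eq (R : rep K) (g h : rG R) :
  (forall v, ract v g = ract v h) -> forall v, ract v (ginv g) = ract v (ginv h).
Proof.
move=> eq_gh v.
have -> : ract v (ginv g) = ract (ract (ract v (ginv h)) h) (ginv g).
  by rewrite [ract (ract v _) h]ract_mul gmulV ract_one.
by rewrite -eq_gh [ract (ract _ g) _]ract_mul gmulVr ract_one.
Qed.

Lemma qmkM (R : rep K) (g h : rG R) :
  qmk (gmul g h) = @gmul (quot_grp R) (qmk g) (qmk h).
Proof. by apply: qmk_eq => v; rewrite -!ract_mul !qrep_act. Qed.

Lemma qmkV (R : rep K) (g : rG R) : qmk (ginv g) = @ginv (quot_grp R) (qmk g).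
Proof. by apply: qmk_eq; apply: ract_ginv_eq => v; rewrite qrep_act. Qed.

Lemma weval_qmk (R : rep K) (b : nat -> rG R) (w : fword) :
  @weval (quot_grp R) (fun y => qmk (b y)) w = qmk (weval b w).
Proof. by rewrite (@weval_morph _ (quot_grp R)) //; [apply: qmkM|apply: qmkV]. Qed.

Lemma sat_faithful (R : rep K) a (b : nat -> rG (faithful_rep R)) (b' : nat -> rG R)
    (u : formula K) :
  (forall y, b y = qmk (b' y)) -> sat a b u <-> sat (R := R) a b' u.
Proof.
move=> bE; rewrite !satE; apply: sat_act_ext => w _ v; rewrite /word_action /=.
have -> : weval b w = @weval (quot_grp R) (fun y => qmk (b' y)) w.
  by apply: weval_eq_on => y _; exact: bE.
by rewrite weval_qmk qrep_act.
Qed.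

Lemma holds_faithful (R : rep K) (u : formula K) : holds (faithful_rep R) u <-> holds R u.
Proof.
split=> H a b.
- by apply/(@sat_faithful R a (fun y => qmk (b y)) b u (fun _ => erefl)).
- by apply/(@sat_faithful R a b (fun y => qrep (b y)) u (fun y => qmk_rep (b y))).
Qed.

Lemma holds_restrict (R : rep K) (S : subgroup (rG R)) (u : formula K) :
  holds R u -> holds (restrict S) u.
Proof. by move=> H a b; apply/sat_restrict. Qed.

Definition gen_subgroup (G : grp) (s : seq G) : subgroup G :=
  Subgroup (@gen_one G s) (@gen_mul G s) (@gen_inv G s).

Lemma fin_gen_subgroup (G : grp) (s : seq G) : fin_gen (gen_subgroup s).
Proof. by exists s. Qed.

Lemma gen_map (G : grp) (b : nat -> G) (s : seq nat) (y : nat) :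
  y \in s -> gen [seq b z | z <- s] (b y).
Proof.
move=> y_s; apply: gen_in; elim: s y_s => [|z s IH] //=.
by rewrite inE => /predU1P[->|/IH]; [left|right].
Qed.

Lemma holds_fin_gen (R : rep K) (u : formula K) :
  (forall S : subgroup (rG R), fin_gen S -> holds (restrict S) u) -> holds R u.
Proof.
move=> H a b.
pose s := [seq b y | y <- fletters u].
have gen_b y : gen s (if y \in fletters u then b y else gone).
  by case: ifP => [y_u|_]; [exact: gen_map|exact: gen_one].
pose b' y : rG (restrict (gen_subgroup s)) := exist _ _ (gen_b y).
rewrite (@sat_eq_on R a b (fun y => proj1_sig (b' y))) => [|y /= ->] //.
by apply/sat_restrict; exact: H (fin_gen_subgroup s) a b'.
Qed.

End Transfer.

Theorem theorem2p1 (K : comPzRingType) (T : formula K -> Prop) :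
  saturated (models T) /\ right_hereditary (models T) /\ right_local (models T).
Proof.
split; [|split].
- by move=> R; split=> H u Tu; apply/holds_faithful; exact: H.
- by move=> R H S u Tu; apply: holds_restrict; exact: H.
- by move=> R H u Tu; apply: holds_fin_gen => S S_fin; exact: H.
Qed.
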